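(* Let $A=\sum_{j=1}^\infty E_j$, where $E_j$ are rank-one projections and the series converges in the strong operator topology. Let $\mu=\langle\mu_j\rangle_{j=1}^\infty$ with $0<\mu_j\le\frac12$ and $\lambda=\langle\lambda_j\rangle_{j=1}^\infty$ with $0<\lambda_j<\frac12$, such that $\sum_{j=1}^\infty\mu_j<\infty$, $\sum_{j=1}^\infty\lambda_j<\infty$, and $\sum_{j=1}^\infty\mu_j-\sum_{j=1}^\infty\lambda_j\in\mathbb Z$. Let $\xi$ be the sequence whose entries consist of the $\mu_j$ and the $1-\lambda_j$. Then $\xi\in\operatorname{Adm}(A)$.
   Context: $\operatorname{Adm}(A)$ is the set of sequences $\xi\in\ell^\infty_+$ such that $A=\sum_j\xi_jP_j$ for some rank-one projections $P_j$ (series converging in the strong operator topology if infinite); admissibility is invariant under permutation of the sequence. *)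

From Stdlib Require Import Reals ZArith.
Open Scope R_scope.

Record C : Type := mkC { Re : R; Im : R }.
Definition C0 : C := mkC 0 0.
Definition C1 : C := mkC 1 0.
Definition RtoC (r : R) : C := mkC r 0.
Definition Cadd (a b : C) : C := mkC (Re a + Re b) (Im a + Im b).
Definition Cmul (a b : C) : C :=
  mkC (Re a * Re b - Im a * Im b) (Re a * Im b + Im a * Re b).
Definition Cconj (a : C) : C := mkC (Re a) (- Im a).

Record CHilbert : Type := {
  vec :> Type;
  vadd : vec -> vec -> vec;
  vzero : vec;
  vopp : vec -> vec;
  smul : C -> vec -> vec;
  inner : vec -> vec -> C;
  vadd_assoc : forall x y z, vadd x (vadd y z) = vadd (vadd x y) z;
  vadd_comm : forall x y, vadd x y = vadd y x;
  vadd_zero : forall x, vadd x vzero = x;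
  vadd_opp : forall x, vadd x (vopp x) = vzero;
  smul_one : forall x, smul C1 x = x;
  smul_assoc : forall a b x, smul a (smul b x) = smul (Cmul a b) x;
  smul_vadd : forall a x y, smul a (vadd x y) = vadd (smul a x) (smul a y);
  smul_cadd : forall a b x, smul (Cadd a b) x = vadd (smul a x) (smul b x);
  inner_add_l : forall x y z, inner (vadd x y) z = Cadd (inner x z) (inner y z);
  inner_smul_l : forall a x y, inner (smul a x) y = Cmul a (inner x y);
  inner_conj_sym : forall x y, inner y x = Cconj (inner x y);
  inner_pos : forall x, 0 <= Re (inner x x);
  inner_def : forall x, inner x x = C0 -> x = vzero;
  complete : forall u : nat -> vec,
    (forall eps, eps > 0 -> exists N, forall m n, (m >= N)%nat -> (n >= N)%nat ->
        sqrt (Re (inner (vadd (u m) (vopp (u n))) (vadd (u m) (vopp (u n))))) < eps) ->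
    exists l, forall eps, eps > 0 -> exists N, forall n, (n >= N)%nat ->
        sqrt (Re (inner (vadd (u n) (vopp l)) (vadd (u n) (vopp l)))) < eps
}.

Arguments vadd {c}. Arguments vzero {c}. Arguments vopp {c}.
Arguments smul {c}. Arguments inner {c}.

Definition vnorm {H : CHilbert} (x : H) : R := sqrt (Re (inner x x)).

Definition operator (H : CHilbert) := H -> H.

Definition rank_one_projection {H : CHilbert} (P : operator H) : Prop :=
  exists e : H, vnorm e = 1 /\ forall x : H, P x = smul (inner x e) e.

Fixpoint psum {H : CHilbert} (T : nat -> operator H) (x : H) (n : nat) : H :=
  match n with
  | O => vzero
  | S n' => vadd (psum T x n') (T n' x)
  end.

Definition sot_sum {H : CHilbert} (T : nat -> operator H) (A : operator H) : Prop :=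
  forall x : H, forall eps, eps > 0 -> exists N, forall n, (n >= N)%nat ->
    vnorm (vadd (psum T x n) (vopp (A x))) < eps.

Definition Adm {H : CHilbert} (A : operator H) (xi : nat -> R) : Prop :=
  (forall j, 0 <= xi j) /\ (exists M, forall j, xi j <= M) /\
  exists P : nat -> operator H,
    (forall j, rank_one_projection (P j)) /\
    sot_sum (fun j x => smul (RtoC (xi j)) (P j x)) A.

(* the sequence consisting of the mu_j and the 1 - lambda_j, interleaved
   (admissibility is permutation invariant, so the order is immaterial) *)
Definition interleave (mu lam : nat -> R) (k : nat) : R :=
  if Nat.even k then mu (Nat.div2 k) else 1 - lam (Nat.div2 k).

From Pilot Require Import Defs.
From Stdlib Require Import Reals ZArith Lra Lia Classical ClassicalEpsilon.
Open Scope R_scope.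

(* Write E_j = e_j ⊗ e_j. The e_j are redistributed greedily into pieces v_k with
   |v_k|^2 = xi_k: a residual w with |w|^2 < 1 is carried along, and at each step
   a piece is either cut off w or obtained by rotating w together with the next
   unused e_j, so that sum_{j<K} e_j ⊗ e_j = sum_{i<k} v_i ⊗ v_i + w_k ⊗ w_k.
   Normalising the v_k gives the projections; what remains is <x, w_k> -> 0.
   Since |w_k|^2 + sum_{i<k} xi_i is an integer and sum mu - sum lam is one,
   |w_{2j}|^2 equals the tail excess sum_{i>=j} (mu_i - lam_i) whenever that is
   nonnegative, so if this happens infinitely often the residual is infinitely
   often small. Otherwise every odd step (weight 1 - lam_j) consumes a new e_j and
   multiplies |<x, w>|^2 by at most the ratio of consecutive tails of sum lam,
   a product that telescopes to 0. *)

(** * Complex numbers *)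

Lemma C_ext (a b : Defs.C) : Re a = Re b -> Im a = Im b -> a = b.
Proof. destruct a, b; simpl; intros; subst; reflexivity. Qed.

Definition Cnorm2 (c : Defs.C) : R := Re c * Re c + Im c * Im c.
Definition Cmod (c : Defs.C) : R := sqrt (Cnorm2 c).

Lemma Cnorm2_ge0 c : 0 <= Cnorm2 c.
Proof. unfold Cnorm2; nra. Qed.

Lemma Cnorm2_mul a b : Cnorm2 (Cmul a b) = Cnorm2 a * Cnorm2 b.
Proof. unfold Cnorm2; simpl; ring. Qed.

Lemma Cmod_ge0 c : 0 <= Cmod c.
Proof. apply sqrt_pos. Qed.

Lemma Cmod_mul a b : Cmod (Cmul a b) = Cmod a * Cmod b.
Proof. unfold Cmod. rewrite Cnorm2_mul, sqrt_mult; auto using Cnorm2_ge0. Qed.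

Lemma Cmod_conj c : Cmod (Cconj c) = Cmod c.
Proof. unfold Cmod, Cnorm2; simpl. f_equal; ring. Qed.

Lemma Cmod_RtoC s : Cmod (RtoC s) = Rabs s.
Proof. unfold Cmod, Cnorm2; simpl. rewrite Rmult_0_l, Rplus_0_r. apply sqrt_Rsqr_abs. Qed.

Lemma Cmod_add_le a b : Cmod (Cadd a b) <= Cmod a + Cmod b.
Proof.
  unfold Cmod. pose proof (sqrt_pos (Cnorm2 a)). pose proof (sqrt_pos (Cnorm2 b)).
  apply Rsqr_incr_0_var; [|lra]. unfold Rsqr.
  rewrite sqrt_sqrt by apply Cnorm2_ge0.
  replace ((sqrt (Cnorm2 a) + sqrt (Cnorm2 b)) * (sqrt (Cnorm2 a) + sqrt (Cnorm2 b))) with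
    (sqrt (Cnorm2 a) * sqrt (Cnorm2 a) + sqrt (Cnorm2 b) * sqrt (Cnorm2 b)
     + 2 * sqrt (Cnorm2 a * Cnorm2 b)) by (rewrite sqrt_mult by apply Cnorm2_ge0; ring).
  rewrite !sqrt_sqrt by apply Cnorm2_ge0.
  set (p := Re a * Re b + Im a * Im b).
  assert (hp : p <= sqrt (Cnorm2 a * Cnorm2 b)).
  { destruct (Rle_dec p 0); [pose proof (sqrt_pos (Cnorm2 a * Cnorm2 b)); lra|].
    rewrite <- (sqrt_Rsqr p) by lra. apply sqrt_le_1_alt. unfold Rsqr, p, Cnorm2.
    pose proof (Rle_0_sqr (Re a * Im b - Im a * Re b)). unfold Rsqr in *. nra. }
  unfold Cnorm2, p in *; simpl. nra.
Qed.

(* Multiplying [e] by [phase <w, e>] makes it real-orthogonal to [w]. *)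
Definition phase (c : Defs.C) : Defs.C :=
  if Rlt_dec 0 (Cmod c) then mkC (- Im c / Cmod c) (Re c / Cmod c) else Defs.C1.

Lemma Cnorm2_phase c : Cnorm2 (phase c) = 1.
Proof.
  unfold phase. destruct (Rlt_dec 0 (Cmod c)) as [h|h]; [|unfold Cnorm2; simpl; ring].
  assert (e : Cmod c * Cmod c = Cnorm2 c) by apply sqrt_sqrt, Cnorm2_ge0.
  unfold Cnorm2 in *; simpl.
  transitivity ((Re c * Re c + Im c * Im c) / (Cmod c * Cmod c)); [field; lra|].
  rewrite <- e. field. lra.
Qed.

Lemma Re_conj_phase_mul c : Re (Cmul (Cconj (phase c)) c) = 0.
Proof.
  unfold phase. destruct (Rlt_dec 0 (Cmod c)) as [h|h]; [simpl; field; lra|].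
  assert (hc : Cnorm2 c = 0).
  { apply sqrt_eq_0; [apply Cnorm2_ge0|]. pose proof (Cmod_ge0 c). unfold Cmod in *. lra. }
  unfold Cnorm2 in hc. simpl. assert (Re c = 0) by nra. nra.
Qed.

(** * Inner-product algebra *)

Section HilbertAlgebra.
Variable H : CHilbert.
Implicit Types x y z u v w : H.

Lemma vadd0l x : vadd vzero x = x.
Proof. rewrite vadd_comm; apply vadd_zero. Qed.

Lemma vaddACA x y z w : vadd (vadd x y) (vadd z w) = vadd (vadd x z) (vadd y w).
Proof. rewrite <- !vadd_assoc. f_equal. rewrite !vadd_assoc. f_equal. apply vadd_comm. Qed.

Lemma vaddK x y : vadd (vadd x y) (vopp y) = x.
Proof. rewrite <- vadd_assoc, vadd_opp, vadd_zero. reflexivity. Qed.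

Lemma vsub_split x y z : vadd x (vopp y) = vadd (vadd x (vopp z)) (vadd z (vopp y)).
Proof.
  rewrite <- vadd_assoc. f_equal.
  rewrite vadd_assoc, (vadd_comm H (vopp z) z), vadd_opp, vadd0l. reflexivity.
Qed.

Lemma vadd_subAC x y z : vadd (vadd x y) (vopp z) = vadd (vadd x (vopp z)) y.
Proof. rewrite <- !vadd_assoc. f_equal. apply vadd_comm. Qed.

Lemma smul0 x : smul C0 x = vzero.
Proof.
  assert (h : smul C0 x = vadd (smul C0 x) (smul C0 x)).
  { rewrite <- smul_cadd. f_equal. apply C_ext; simpl; ring. }
  rewrite <- (vadd_opp H (smul C0 x)). rewrite h at 2. rewrite <- vadd_assoc, vadd_opp, vadd_zero. reflexivity.
Qed.

Lemma smulv0 c : smul c (@vzero H) = vzero.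
Proof.
  rewrite <- (smul0 vzero), smul_assoc. f_equal. apply C_ext; simpl; ring.
Qed.

Lemma vopp_unique x y : vadd x y = vzero -> y = vopp x.
Proof.
  intro h. rewrite <- (vadd_zero H (vopp x)), <- h, vadd_assoc.
  rewrite (vadd_comm H (vopp x) x), vadd_opp, vadd0l. reflexivity.
Qed.

Lemma vopp_smul x : vopp x = smul (RtoC (-1)) x.
Proof.
  symmetry; apply vopp_unique.
  rewrite <- (smul_one H x) at 1. rewrite <- smul_cadd, <- (smul0 x).
  f_equal. apply C_ext; simpl; ring.
Qed.

Lemma inner0l y : inner vzero y = C0.
Proof. rewrite <- (smul0 vzero), inner_smul_l. apply C_ext; simpl; ring. Qed.

Lemma inner_add_r x y z : inner x (vadd y z) = Cadd (inner x y) (inner x z).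
Proof.
  rewrite (inner_conj_sym H (vadd y z)), inner_add_l, (inner_conj_sym H y), (inner_conj_sym H z).
  apply C_ext; simpl; ring.
Qed.

Lemma inner_smul_r a x y : inner x (smul a y) = Cmul (Cconj a) (inner x y).
Proof.
  rewrite (inner_conj_sym H (smul a y)), inner_smul_l, (inner_conj_sym H y).
  apply C_ext; simpl; ring.
Qed.

Lemma Im_inner_self x : Im (inner x x) = 0.
Proof. pose proof (f_equal Im (inner_conj_sym H x x)). simpl in *. lra. Qed.

Definition sqnorm x : R := Re (inner x x).

Lemma sqnorm_ge0 x : 0 <= sqnorm x.
Proof. apply inner_pos. Qed.

Lemma sqnorm_eq0 x : sqnorm x = 0 -> x = vzero.
Proof. intro h. apply inner_def, C_ext; [exact h | apply Im_inner_self]. Qed.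

Lemma sqnorm_add_smul x c y :
  sqnorm (vadd x (smul c y)) =
  sqnorm x + 2 * (Re c * Re (inner x y) + Im c * Im (inner x y)) + Cnorm2 c * sqnorm y.
Proof.
  unfold sqnorm, Cnorm2. rewrite inner_add_l, !inner_add_r, !inner_smul_l, inner_smul_r.
  rewrite inner_smul_r, (inner_conj_sym H y x).
  pose proof (Im_inner_self x). pose proof (Im_inner_self y). simpl. nra.
Qed.

Lemma sqnorm_smul c x : sqnorm (smul c x) = Cnorm2 c * sqnorm x.
Proof.
  unfold sqnorm, Cnorm2. rewrite inner_smul_l, inner_smul_r.
  pose proof (Im_inner_self x). simpl. nra.
Qed.

Lemma sqnorm_lincomb (a b : R) x y :
  sqnorm (vadd (smul (RtoC a) x) (smul (RtoC b) y)) =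
  a * a * sqnorm x + 2 * a * b * Re (inner x y) + b * b * sqnorm y.
Proof.
  rewrite sqnorm_add_smul, sqnorm_smul, inner_smul_l. unfold Cnorm2; simpl. ring.
Qed.

Lemma sqnorm_vopp x : sqnorm (vopp x) = sqnorm x.
Proof. rewrite vopp_smul, sqnorm_smul. unfold Cnorm2; simpl; ring. Qed.

Lemma sqnorm_sub_sym x y : sqnorm (vadd x (vopp y)) = sqnorm (vadd y (vopp x)).
Proof.
  rewrite !vopp_smul, !sqnorm_add_smul, (inner_conj_sym H x y).
  unfold Cnorm2; simpl. ring.
Qed.

Lemma sqnorm_add_le x y : sqnorm (vadd x y) <= 2 * sqnorm x + 2 * sqnorm y.
Proof.
  pose proof (sqnorm_ge0 (vadd x (smul (RtoC (-1)) y))) as h.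
  rewrite <- (smul_one H y) at 1. rewrite !sqnorm_add_smul in *.
  unfold Cnorm2 in *; simpl in *. lra.
Qed.

Lemma Re_inner_le x y (t : R) : 0 < t ->
  Re (inner x y) <= (t * sqnorm x + sqnorm y / t) / 2.
Proof.
  intro ht.
  pose proof (sqnorm_ge0 (vadd (smul (RtoC t) x) (smul (RtoC (-1)) y))) as h.
  rewrite sqnorm_lincomb in h.
  apply Rmult_le_reg_r with t; [lra|].
  replace ((t * sqnorm x + sqnorm y / t) / 2 * t) with ((t * t * sqnorm x + sqnorm y) / 2) by (field; lra).
  lra.
Qed.

Lemma Re_inner_vopp x y : Re (inner (vopp x) y) = - Re (inner x y).
Proof. rewrite vopp_smul, inner_smul_l. simpl. ring. Qed.

Lemma cauchy_schwarz x y : Cnorm2 (inner x y) <= sqnorm x * sqnorm y.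
Proof.
  destruct (Req_dec (sqnorm y) 0) as [h0|h0].
  - rewrite h0. apply sqnorm_eq0 in h0. subst y.
    rewrite <- (smulv0 C0), inner_smul_r. unfold Cnorm2; simpl. lra.
  - set (n := sqnorm y). set (c := inner x y).
    assert (hn : 0 < n) by (pose proof (sqnorm_ge0 y); unfold n in *; lra).
    pose proof (sqnorm_ge0 (vadd x (smul (mkC (- Re c / n) (- Im c / n)) y))) as h.
    rewrite sqnorm_add_smul in h. fold n c in h. unfold Cnorm2 in *. simpl in h.
    apply Rmult_le_reg_r with (/ n); [apply Rinv_0_lt_compat; lra|].
    replace (sqnorm x * n * / n) with (sqnorm x) by (field; lra).
    replace (- Re c / n * Re c + - Im c / n * Im c) with (- ((Re c * Re c + Im c * Im c) * / n)) in h by (field; lra).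
    replace ((- Re c / n * (- Re c / n) + - Im c / n * (- Im c / n)) * n)
      with ((Re c * Re c + Im c * Im c) * / n) in h by (field; lra).
    lra.
Qed.

Definition outer v : operator H := fun x => smul (inner x v) v.

Lemma outer_vzero x : outer vzero x = vzero.
Proof. apply smulv0. Qed.

Lemma outer_smul_real (s : R) v x : outer (smul (RtoC s) v) x = smul (RtoC (s * s)) (outer v x).
Proof. unfold outer. rewrite inner_smul_r, !smul_assoc. f_equal. apply C_ext; simpl; ring. Qed.

Lemma outer_phase c v x : Cnorm2 c = 1 -> outer (smul c v) x = outer v x.
Proof.
  unfold outer, Cnorm2; intro h. rewrite inner_smul_r, smul_assoc.
  rewrite <- (smul_one H (smul (inner x v) v)), smul_assoc. f_equal.
  apply C_ext; simpl; [transitivity ((Re c * Re c + Im c * Im c) * Re (inner x v))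
                     |transitivity ((Re c * Re c + Im c * Im c) * Im (inner x v))];
  (ring || (rewrite h; ring)).
Qed.

Lemma outer_split (s t : R) v x : s * s + t * t = 1 ->
  vadd (outer (smul (RtoC s) v) x) (outer (smul (RtoC t) v) x) = outer v x.
Proof.
  intro h. rewrite !outer_smul_real, <- smul_cadd.
  rewrite <- (smul_one H (outer v x)) at 2. f_equal. apply C_ext; simpl; lra.
Qed.

Lemma outer_rotate (s t : R) v w x : s * s + t * t = 1 ->
  vadd (outer (vadd (smul (RtoC s) v) (smul (RtoC t) w)) x)
       (outer (vadd (smul (RtoC (- t)) v) (smul (RtoC s) w)) x) =
  vadd (outer v x) (outer w x).
Proof.
  intro h. unfold outer. rewrite !inner_add_r, !inner_smul_r, !smul_vadd, !smul_assoc.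
  rewrite vaddACA, <- !smul_cadd. f_equal; f_equal; apply C_ext; simpl;
  match goal with |- _ = ?rhs => transitivity ((s * s + t * t) * rhs); [ring | rewrite h; ring] end.
Qed.

End HilbertAlgebra.

(** * The greedy transfer *)

Lemma div_ge0 a b : 0 <= a -> 0 < b -> 0 <= a / b.
Proof. intros. apply Rmult_le_pos; [lra | apply Rlt_le, Rinv_0_lt_compat; lra]. Qed.

Lemma div_le1 a b : 0 < b -> a <= b -> a / b <= 1.
Proof. intros. replace (a / b) with (1 - (b - a) / b) by (field; lra). pose proof (div_ge0 (b - a) b). lra. Qed.

Lemma sqrt_div_sq a b : 0 <= a -> 0 < b -> sqrt (a / b) * sqrt (a / b) = a / b.
Proof. intros. apply sqrt_sqrt, div_ge0; lra. Qed.

Lemma sqrt_le_of_le_sq a b : 0 <= b -> a <= b * b -> sqrt a <= b.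
Proof.
  intros hb h. rewrite <- (sqrt_square b hb). destruct (Rle_dec 0 a).
  - apply sqrt_le_1_alt. exact h.
  - rewrite sqrt_neg_0 by lra. apply sqrt_pos.
Qed.

Fixpoint rsum (f : nat -> R) (n : nat) : R :=
  match n with O => 0 | S n => rsum f n + f n end.

Lemma rsum_le f n m : (forall j, 0 <= f j) -> (n <= m)%nat -> rsum f n <= rsum f m.
Proof. intros hf h. induction h; [lra|]. simpl. pose proof (hf m). lra. Qed.

(* [K] counts the [e j] consumed so far and [w] is the residual. The piece [v]
   with [|v|^2 = xi k] is cut off [w] if [w] is long enough; otherwise [w] and
   [e K] (rotated to be real-orthogonal to [w]) are rotated into [v] and the new
   residual. Either way [v ⊗ v + w' ⊗ w'] equals what was consumed. *)
Definition transfer_step {H : CHilbert} (e : nat -> H) (xi : nat -> R) (k : nat) (s : nat * H)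
  : H * (nat * H) :=
  let (K, w) := s in
  let o := xi k in let r := sqnorm H w in
  if Rle_dec o r then
    (smul (RtoC (sqrt (o / r))) w, (K, smul (RtoC (sqrt ((r - o) / r))) w))
  else
    let u := smul (phase (inner w (e K))) (e K) in
    let a := sqrt ((1 - o) / (1 - r)) in let b := sqrt ((o - r) / (1 - r)) in
    (vadd (smul (RtoC a) w) (smul (RtoC b) u),
     (S K, vadd (smul (RtoC (- b)) w) (smul (RtoC a) u))).

Fixpoint transfer_state {H : CHilbert} (e : nat -> H) (xi : nat -> R) (k : nat) : nat * H :=
  match k with
  | O => (O, vzero)
  | S k => snd (transfer_step e xi k (transfer_state e xi k))
  end.

Section Transfer.
Variable H : CHilbert.
Variable e : nat -> H.
Hypothesis e_unit : forall j, sqnorm H (e j) = 1.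
Variable xi : nat -> R.
Hypothesis xi_range : forall k, 0 < xi k < 1.

Definition piece k : H := fst (transfer_step e xi k (transfer_state e xi k)).
Definition used k : nat := fst (transfer_state e xi k).
Definition resid k : H := snd (transfer_state e xi k).
Definition resid_sq k : R := sqnorm H (resid k).

Lemma transfer_step_scale k K w : xi k <= sqnorm H w ->
  let '(v, (K', w')) := transfer_step e xi k (K, w) in
  K' = K /\ sqnorm H w' = sqnorm H w - xi k /\ sqnorm H v = xi k /\
  (forall x, vadd (outer H v x) (outer H w' x) = outer H w x) /\
  (forall x, Cmod (inner x w') <= Cmod (inner x w)).
Proof.
  intro ho. simpl. destruct (Rle_dec (xi k) (sqnorm H w)) as [_|]; [|contradiction].
  pose proof (xi_range k). set (r := sqnorm H w) in *. set (o := xi k) in *.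
  assert (e1 : sqrt (o / r) * sqrt (o / r) = o / r) by (apply sqrt_div_sq; lra).
  assert (e2 : sqrt ((r - o) / r) * sqrt ((r - o) / r) = (r - o) / r) by (apply sqrt_div_sq; lra).
  repeat split.
  - rewrite sqnorm_smul. unfold Cnorm2; simpl. rewrite Rmult_0_l, Rplus_0_r, e2. fold r. field. lra.
  - rewrite sqnorm_smul. unfold Cnorm2; simpl. rewrite Rmult_0_l, Rplus_0_r, e1. fold r. field. lra.
  - intro x. apply outer_split. rewrite e1, e2. field. lra.
  - intro x. rewrite inner_smul_r, Cmod_mul, Cmod_conj, Cmod_RtoC, Rabs_pos_eq by apply sqrt_pos.
    assert (sqrt ((r - o) / r) <= 1) by (rewrite <- sqrt_1; apply sqrt_le_1_alt, div_le1; lra).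
    pose proof (Cmod_ge0 (inner x w)). nra.
Qed.

Lemma transfer_step_rotate k K w : sqnorm H w < xi k ->
  let '(v, (K', w')) := transfer_step e xi k (K, w) in
  K' = S K /\ sqnorm H w' = sqnorm H w + 1 - xi k /\ sqnorm H v = xi k /\
  (forall x, vadd (outer H v x) (outer H w' x) = vadd (outer H w x) (outer H (e K) x)) /\
  (forall x, Cmod (inner x w') <=
             sqrt ((xi k - sqnorm H w) / (1 - sqnorm H w)) * Cmod (inner x w) +
             sqrt ((1 - xi k) / (1 - sqnorm H w)) * Cmod (inner x (e K))).
Proof.
  intro ho. simpl. destruct (Rle_dec (xi k) (sqnorm H w)); [lra|].
  pose proof (xi_range k). pose proof (sqnorm_ge0 H w).
  set (r := sqnorm H w) in *. set (o := xi k) in *.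
  set (c := phase (inner w (e K))).
  set (a := sqrt ((1 - o) / (1 - r))). set (b := sqrt ((o - r) / (1 - r))).
  assert (ea : a * a = (1 - o) / (1 - r)) by (apply sqrt_div_sq; lra).
  assert (eb : b * b = (o - r) / (1 - r)) by (apply sqrt_div_sq; lra).
  assert (hab : a * a + b * b = 1) by (rewrite ea, eb; field; lra).
  assert (hu : sqnorm H (smul c (e K)) = 1) by (rewrite sqnorm_smul, e_unit; unfold c; rewrite Cnorm2_phase; ring).
  assert (horth : Re (inner w (smul c (e K))) = 0) by (rewrite inner_smul_r; apply Re_conj_phase_mul).
  repeat split.
  - rewrite sqnorm_lincomb, hu, horth. fold r. replace (- b * - b) with (b * b) by ring.
    rewrite ea, eb. field. lra.
  - rewrite sqnorm_lincomb, hu, horth. fold r. rewrite ea, eb. field. lra.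
  - intro x. rewrite outer_rotate by exact hab. f_equal. apply outer_phase, Cnorm2_phase.
  - intro x. rewrite inner_add_r, !inner_smul_r.
    eapply Rle_trans; [apply Cmod_add_le|].
    rewrite !Cmod_mul, !Cmod_conj, !Cmod_RtoC.
    assert (hc : Cmod c = 1) by (unfold Cmod, c; rewrite Cnorm2_phase, sqrt_1; reflexivity).
    rewrite hc, Rabs_Ropp, !Rabs_pos_eq by apply sqrt_pos. fold a b. lra.
Qed.

Lemma transfer_cases k :
  (xi k <= resid_sq k /\ used (S k) = used k /\ resid_sq (S k) = resid_sq k - xi k /\
   sqnorm H (piece k) = xi k /\
   (forall x, vadd (outer H (piece k) x) (outer H (resid (S k)) x) = outer H (resid k) x) /\
   (forall x, Cmod (inner x (resid (S k))) <= Cmod (inner x (resid k))))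
  \/
  (resid_sq k < xi k /\ used (S k) = S (used k) /\ resid_sq (S k) = resid_sq k + 1 - xi k /\
   sqnorm H (piece k) = xi k /\
   (forall x, vadd (outer H (piece k) x) (outer H (resid (S k)) x) =
              vadd (outer H (resid k) x) (outer H (e (used k)) x)) /\
   (forall x, Cmod (inner x (resid (S k))) <=
              sqrt ((xi k - resid_sq k) / (1 - resid_sq k)) * Cmod (inner x (resid k)) +
              sqrt ((1 - xi k) / (1 - resid_sq k)) * Cmod (inner x (e (used k))))).
Proof.
  unfold resid_sq, used, resid, piece.
  change (transfer_state e xi (S k)) with (snd (transfer_step e xi k (transfer_state e xi k))).
  destruct (transfer_state e xi k) as [K w].
  change (fst (K, w)) with K. change (snd (K, w)) with w. destruct (Rle_dec (xi k) (sqnorm H w)) as [h|h].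
  - left. pose proof (transfer_step_scale k K w h) as sp.
    destruct (transfer_step e xi k (K, w)) as [v [K' w']]. simpl. tauto.
  - right. apply Rnot_le_lt in h. pose proof (transfer_step_rotate k K w h) as sp.
    destruct (transfer_step e xi k (K, w)) as [v [K' w']]. simpl. tauto.
Qed.

Lemma resid_sq_bounds k : 0 <= resid_sq k < 1.
Proof.
  induction k.
  - unfold resid_sq, resid, sqnorm; simpl. rewrite inner0l. simpl. lra.
  - pose proof (xi_range k). destruct (transfer_cases k) as [h|h]; lra.
Qed.

Lemma piece_sqnorm k : sqnorm H (piece k) = xi k.
Proof. destruct (transfer_cases k) as [h|h]; apply h. Qed.

Lemma used_step k : used (S k) = used k \/ used (S k) = S (used k).
Proof. destruct (transfer_cases k) as [h|h]; [left|right]; apply h. Qed.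

Lemma used_mono k l : (k <= l)%nat -> (used k <= used l)%nat.
Proof. induction 1; [lia|]. destruct (used_step m); lia. Qed.

Lemma resid_sq_add_rsum k : resid_sq k + rsum xi k = INR (used k).
Proof.
  induction k.
  - unfold resid_sq, resid, sqnorm; simpl. rewrite inner0l. simpl. lra.
  - simpl rsum. destruct (transfer_cases k) as [[_ [hK [hr _]]]|[_ [hK [hr _]]]];
      rewrite hK, hr; [|rewrite S_INR]; lra.
Qed.

Lemma psum_outer_decomposition k x :
  psum (fun j => outer H (e j)) x (used k) =
  vadd (psum (fun i => outer H (piece i)) x k) (outer H (resid k) x).
Proof.
  induction k.
  - simpl. rewrite outer_vzero, vadd_zero. reflexivity.
  - simpl psum. rewrite <- vadd_assoc.
    destruct (transfer_cases k) as [[_ [hK [_ [_ [hR _]]]]]|[_ [hK [_ [_ [hR _]]]]]];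
      rewrite hK, hR; simpl psum; rewrite IHk; [reflexivity|].
    rewrite vadd_assoc. reflexivity.
Qed.

(* At step [k] the coefficient [|<x, resid k>|] is multiplied by at most
   [shrink k] and receives at most [inflow k] times that of the new [e (used k)]. *)
Definition shrink k : R :=
  if Rle_dec (xi k) (resid_sq k) then 1 else sqrt ((xi k - resid_sq k) / (1 - resid_sq k)).
Definition inflow k : R :=
  if Rle_dec (xi k) (resid_sq k) then 0 else sqrt ((1 - xi k) / (1 - resid_sq k)).

Fixpoint decay (s d : nat) : R :=
  match d with O => 1 | S d => decay s d * (shrink (s + d) * shrink (s + d)) end.

Lemma shrink_bounds k : 0 <= shrink k <= 1.
Proof.
  unfold shrink. destruct (Rle_dec (xi k) (resid_sq k)); [lra|].
  pose proof (resid_sq_bounds k). pose proof (xi_range k). split; [apply sqrt_pos|].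
  apply Rle_trans with (sqrt 1); [apply sqrt_le_1_alt, div_le1 | rewrite sqrt_1]; lra.
Qed.

Lemma inflow_shrink k : 0 <= inflow k /\ inflow k * inflow k + shrink k * shrink k = 1.
Proof.
  unfold inflow, shrink. destruct (Rle_dec (xi k) (resid_sq k)); [lra|].
  pose proof (resid_sq_bounds k). pose proof (xi_range k). split; [apply sqrt_pos|].
  rewrite !sqrt_div_sq by lra. field. lra.
Qed.

Lemma decay_bounds s d : 0 <= decay s d <= 1.
Proof. induction d; simpl; [lra|]. pose proof (shrink_bounds (s + d)). nra. Qed.

Lemma decay_antimono s d d' : (d <= d')%nat -> decay s d' <= decay s d.
Proof.
  induction 1; [lra|]. simpl. pose proof (shrink_bounds (s + m)). pose proof (decay_bounds s m).
  assert (shrink (s + m) * shrink (s + m) <= 1) by nra. nra.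
Qed.

Section Coefficient.
Variable x : H.

Definition coef k : R := Cmod (inner x (resid k)).
Definition energy n : R := rsum (fun j => Cnorm2 (inner x (e j))) n.

Lemma energy_mono n m : (n <= m)%nat -> energy n <= energy m.
Proof. apply rsum_le. intro. apply Cnorm2_ge0. Qed.

Lemma coef_le k : coef k <= sqrt (sqnorm H x * resid_sq k).
Proof. apply sqrt_le_1_alt, cauchy_schwarz. Qed.

Lemma coef_step k :
  coef (S k) <= shrink k * coef k + inflow k * sqrt (energy (used (S k)) - energy (used k)).
Proof.
  unfold coef, shrink, inflow.
  destruct (transfer_cases k) as [[hle [_ [_ [_ [_ hg]]]]]|[hlt [hK [_ [_ [_ hg]]]]]].
  - destruct (Rle_dec (xi k) (resid_sq k)); [|contradiction]. specialize (hg x). lra.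
  - destruct (Rle_dec (xi k) (resid_sq k)); [lra|].
    rewrite hK. unfold energy at 1. simpl rsum. fold (energy (used k)).
    replace (energy (used k) + Cnorm2 (inner x (e (used k))) - energy (used k))
      with (Cnorm2 (inner x (e (used k)))) by ring.
    apply hg.
Qed.

Lemma rotation_sum_le (a b s h : R) : 0 <= a -> 0 <= b -> a * a + b * b = 1 -> 0 <= s -> 0 <= h ->
  b * sqrt s + a * h <= sqrt (s + h * h).
Proof.
  intros ha hb hab hs hh. pose proof (sqrt_pos s). pose proof (sqrt_sqrt s hs).
  apply Rsqr_incr_0_var; [|apply sqrt_pos]. unfold Rsqr. rewrite sqrt_sqrt by nra.
  pose proof (Rle_0_sqr (a * sqrt s - b * h)). unfold Rsqr in *. nra.
Qed.

Lemma coef_shift s d :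
  coef (s + d) <= sqrt (decay s d) * coef s + sqrt (energy (used (s + d)) - energy (used s)).
Proof.
  induction d.
  - rewrite Nat.add_0_r, Rminus_diag, sqrt_0. simpl. rewrite sqrt_1. lra.
  - rewrite Nat.add_succ_r. eapply Rle_trans; [apply coef_step|]. simpl decay.
    pose proof (shrink_bounds (s + d)) as [hb0 hb1]. pose proof (decay_bounds s d).
    destruct (inflow_shrink (s + d)) as [ha hab].
    rewrite sqrt_mult, sqrt_square by nra.
    set (b := shrink (s + d)) in *. set (a := inflow (s + d)) in *.
    set (s0 := energy (used (s + d)) - energy (used s)) in *.
    set (h := energy (used (S (s + d))) - energy (used (s + d))).
    assert (hs0 : 0 <= s0) by (pose proof (energy_mono _ _ (used_mono s (s + d) ltac:(lia))); unfold s0; lra).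
    assert (hh : 0 <= h) by (pose proof (energy_mono _ _ (used_mono (s + d) (S (s + d)) ltac:(lia))); unfold h; lra).
    replace (energy (used (S (s + d))) - energy (used s)) with (s0 + sqrt h * sqrt h)
      by (rewrite sqrt_sqrt by lra; unfold s0, h; ring).
    pose proof (rotation_sum_le a b s0 (sqrt h) ha hb0 hab hs0 (sqrt_pos h)).
    pose proof (Rmult_le_compat_l b _ _ hb0 IHd). lra.
Qed.

Section Vanishing.
Hypothesis energy_cauchy : forall eps, eps > 0 ->
  exists M, forall n m, (M <= n)%nat -> (n <= m)%nat -> energy m - energy n <= eps.
Hypothesis used_unbounded : forall M, exists k, (M <= used k)%nat.

Lemma coef_vanish_of_decay :
  (forall eta, eta > 0 -> forall N, exists s, (N <= s)%nat /\
     exists d0, forall d, (d0 <= d)%nat -> sqrt (decay s d) * coef s <= eta) ->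
  forall eps, eps > 0 -> exists N, forall k, (N <= k)%nat -> coef k <= eps.
Proof.
  intros hdec eps heps.
  destruct (energy_cauchy (eps / 2 * (eps / 2))) as [M hM]; [nra|].
  destruct (used_unbounded M) as [N0 hN0].
  destruct (hdec (eps / 2) ltac:(lra) N0) as [s [hs [d0 hd0]]].
  exists (s + d0)%nat. intros k hk. replace k with (s + (k - s))%nat by lia.
  eapply Rle_trans; [apply coef_shift|].
  specialize (hd0 (k - s)%nat ltac:(lia)).
  assert (sqrt (energy (used (s + (k - s))) - energy (used s)) <= eps / 2).
  { apply sqrt_le_of_le_sq; [lra|]. apply hM.
    - pose proof (used_mono _ _ hs). lia.
    - apply used_mono. lia. }
  lra.
Qed.

Lemma coef_vanish_of_resid_small :
  (forall dl, dl > 0 -> forall N, exists k, (N <= k)%nat /\ resid_sq k <= dl) ->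
  forall eps, eps > 0 -> exists N, forall k, (N <= k)%nat -> coef k <= eps.
Proof.
  intros hsmall. apply coef_vanish_of_decay. intros eta heta N.
  pose proof (sqnorm_ge0 H x). set (X := sqnorm H x) in *.
  destruct (hsmall (eta * eta / (X + 1)) ltac:(apply Rdiv_lt_0_compat; nra) N) as [s [hs hr]].
  exists s. split; [exact hs|]. exists O. intros d _.
  pose proof (decay_bounds s d). pose proof (Cmod_ge0 (inner x (resid s))).
  assert (sqrt (decay s d) <= 1) by (rewrite <- sqrt_1; apply sqrt_le_1_alt; lra).
  assert (coef s <= eta).
  { eapply Rle_trans; [apply coef_le|]. apply sqrt_le_of_le_sq; [lra|].
    pose proof (resid_sq_bounds s).
    apply Rle_trans with (X * (eta * eta / (X + 1))); [fold X; nra|].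
    apply Rmult_le_reg_r with (X + 1); [lra|].
    replace (X * (eta * eta / (X + 1)) * (X + 1)) with (X * (eta * eta)) by (field; lra). nra. }
  pose proof (sqrt_pos (decay s d)). unfold coef in *. nra.
Qed.

Lemma coef_vanish_of_decay_vanish :
  (forall N, exists s, (N <= s)%nat /\ forall dl, dl > 0 -> exists d, decay s d <= dl) ->
  forall eps, eps > 0 -> exists N, forall k, (N <= k)%nat -> coef k <= eps.
Proof.
  intros hvan. apply coef_vanish_of_decay. intros eta heta N.
  destruct (hvan N) as [s [hs hd]]. exists s. split; [exact hs|].
  pose proof (sqnorm_ge0 H x). set (X := sqnorm H x) in *.
  destruct (hd (eta * eta / (X + 1)) ltac:(apply Rdiv_lt_0_compat; nra)) as [d0 hd0].
  exists d0. intros d hd'.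
  pose proof (decay_antimono s d0 d hd'). pose proof (decay_bounds s d).
  assert (coef s <= sqrt X).
  { eapply Rle_trans; [apply coef_le|]. apply sqrt_le_1_alt. pose proof (resid_sq_bounds s). fold X. nra. }
  apply Rle_trans with (sqrt (decay s d) * sqrt X).
  { apply Rmult_le_compat_l; [apply sqrt_pos | assumption]. }
  rewrite <- sqrt_mult by lra. apply sqrt_le_of_le_sq; [lra|].
  apply Rle_trans with (eta * eta / (X + 1) * X); [nra|].
  apply Rmult_le_reg_r with (X + 1); [lra|].
  replace (eta * eta / (X + 1) * X * (X + 1)) with (eta * eta * X) by (field; lra). nra.
Qed.

End Vanishing.

Lemma Re_inner_psum_outer n : Re (inner (psum (fun j => outer H (e j)) x n) x) = energy n.
Proof.
  induction n; [simpl; rewrite inner0l; reflexivity|].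
  unfold energy in *. cbn [psum rsum]. rewrite inner_add_l. simpl Re. rewrite IHn. f_equal.
  unfold outer. rewrite inner_smul_l, (inner_conj_sym H (e n) x). unfold Cnorm2. simpl. ring.
Qed.

End Coefficient.

Lemma sqnorm_lt_of_vnorm_lt (v : H) d : vnorm v < d -> sqnorm H v < d * d.
Proof.
  unfold vnorm, sqnorm. intro h. pose proof (sqrt_pos (Re (inner v v))).
  pose proof (sqrt_sqrt _ (inner_pos H v)). nra.
Qed.

Lemma vnorm_lt_of_sqnorm_lt (v : H) d : 0 < d -> sqnorm H v < d * d -> vnorm v < d.
Proof.
  intros hd h. unfold vnorm. rewrite <- (sqrt_square d) by lra. apply sqrt_lt_1_alt.
  split; [apply inner_pos | exact h].
Qed.

Lemma energy_cauchy_of_sot A x : sot_sum (fun j => outer H (e j)) A ->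
  forall eps, eps > 0 ->
  exists M, forall n m, (M <= n)%nat -> (n <= m)%nat -> energy x m - energy x n <= eps.
Proof.
  intros hA eps heps. pose proof (sqnorm_ge0 H x). set (X := sqnorm H x) in *.
  set (dd := eps / (2 * (X + 1))). assert (hdd : dd > 0) by (apply Rdiv_lt_0_compat; lra).
  destruct (hA x dd hdd) as [M hM]. exists M. intros n m hn hnm.
  set (Sn := psum (fun j => outer H (e j)) x n). set (Sm := psum (fun j => outer H (e j)) x m).
  replace (energy x m - energy x n) with (Re (inner (vadd Sm (vopp Sn)) x))
    by (rewrite inner_add_l, <- (Re_inner_psum_outer x n), <- (Re_inner_psum_outer x m); simpl Re;
        rewrite Re_inner_vopp; unfold Sn, Sm; ring).
  set (t := (X + 1) / eps). assert (ht : 0 < t) by (apply Rdiv_lt_0_compat; lra).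
  eapply Rle_trans; [apply (Re_inner_le H _ x t ht)|]. fold X.
  assert (hD : sqnorm H (vadd Sm (vopp Sn)) <= 4 * (dd * dd)).
  { rewrite (vsub_split H Sm Sn (A x)).
    pose proof (sqnorm_add_le H (vadd Sm (vopp (A x))) (vadd (A x) (vopp Sn))).
    rewrite (sqnorm_sub_sym H (A x) Sn) in *.
    pose proof (sqnorm_lt_of_vnorm_lt _ _ (hM m ltac:(lia))).
    pose proof (sqnorm_lt_of_vnorm_lt _ _ (hM n hn)). unfold Sn, Sm in *. lra. }
  assert (e1 : t * (4 * (dd * dd)) = eps / (X + 1)) by (unfold t, dd; field; lra).
  assert (e2 : X / t = X * eps / (X + 1)) by (unfold t; field; lra).
  assert (e3 : eps / (X + 1) + X * eps / (X + 1) = eps) by (field; lra).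
  pose proof (Rmult_le_compat_l t _ _ (Rlt_le _ _ ht) hD). lra.
Qed.

Lemma sot_sum_pieces A : sot_sum (fun j => outer H (e j)) A ->
  (forall M, exists k, (M <= used k)%nat) ->
  (forall x eps, eps > 0 -> exists N, forall k, (N <= k)%nat -> coef x k <= eps) ->
  sot_sum (fun k => outer H (piece k)) A.
Proof.
  intros hA hU hcoef x eps heps.
  destruct (hcoef x (eps / 2)) as [N2 hN2]; [lra|].
  destruct (hA x (eps / 2)) as [M hM]; [lra|].
  destruct (hU M) as [N1 hN1]. exists (max N1 N2). intros n hn.
  pose proof (psum_outer_decomposition n x) as hdec.
  rewrite <- (vaddK H (psum (fun k => outer H (piece k)) x n) (outer H (resid n) x)), <- hdec, vadd_subAC.
  apply vnorm_lt_of_sqnorm_lt; [lra|].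
  eapply Rle_lt_trans; [apply sqnorm_add_le|]. rewrite sqnorm_vopp.
  pose proof (sqnorm_lt_of_vnorm_lt _ _ (hM (used n) ltac:(pose proof (used_mono N1 n ltac:(lia)); lia))).
  assert (sqnorm H (outer H (resid n) x) <= eps / 2 * (eps / 2)).
  { unfold outer. rewrite sqnorm_smul. specialize (hN2 n ltac:(lia)).
    pose proof (resid_sq_bounds n). pose proof (Cnorm2_ge0 (inner x (resid n))).
    pose proof (sqrt_sqrt _ (Cnorm2_ge0 (inner x (resid n)))). pose proof (Cmod_ge0 (inner x (resid n))).
    unfold coef, Cmod, resid_sq in *.
    assert (Cnorm2 (inner x (resid n)) <= eps / 2 * (eps / 2)) by nra. nra. }
  lra.
Qed.

End Transfer.

(** * Interleaving [mu] with [1 - lam] *)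

Lemma rsum_sum_f_R0 f n : rsum f (S n) = sum_f_R0 f n.
Proof. induction n; simpl in *; [ring | rewrite IHn; ring]. Qed.

Lemma rsum_cv f L : infinite_sum f L ->
  forall eps, eps > 0 -> exists N, forall n, (N <= n)%nat -> Rabs (rsum f n - L) < eps.
Proof.
  intros h eps he. destruct (h eps he) as [N hN]. exists (S N). intros [|n] hn; [lia|].
  rewrite rsum_sum_f_R0. apply hN. lia.
Qed.

Lemma rsum_lt_lim f L : (forall j, 0 < f j) -> infinite_sum f L -> forall n, rsum f n < L.
Proof.
  intros hf h n. destruct (Rlt_dec (rsum f n) L) as [|hn]; [assumption|]. exfalso.
  destruct (rsum_cv f L h (f n)) as [N hN]; [apply hf|].
  specialize (hN (max N (S n)) ltac:(lia)). apply Rabs_def2 in hN.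
  pose proof (rsum_le f (S n) (max N (S n)) (fun j => Rlt_le _ _ (hf j)) ltac:(lia)). simpl in *. lra.
Qed.

Lemma IZR_near (m n : Z) : IZR n - 1 < IZR m < IZR n + 1 -> m = n.
Proof.
  intros [h1 h2]. rewrite <- minus_IZR in h1. rewrite <- plus_IZR in h2.
  apply lt_IZR in h1. apply lt_IZR in h2. lia.
Qed.

Lemma interleave_double mu lam j : interleave mu lam (2 * j) = mu j.
Proof. unfold interleave. rewrite Nat.even_even, Nat.div2_double. reflexivity. Qed.

Lemma interleave_succ_double mu lam j : interleave mu lam (S (2 * j)) = 1 - lam j.
Proof. unfold interleave. rewrite Nat.even_succ, Nat.odd_even, Nat.div2_succ_double. reflexivity. Qed.

Lemma rsum_interleave_double mu lam j :
  rsum (interleave mu lam) (2 * j) = INR j + rsum mu j - rsum lam j.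
Proof.
  induction j; [simpl; ring|].
  replace (2 * S j)%nat with (S (S (2 * j))) by lia. cbn [rsum].
  rewrite IHj, interleave_double, interleave_succ_double, S_INR. simpl. ring.
Qed.

Section Interleave.
Variable H : CHilbert.
Variable e : nat -> H.
Hypothesis e_unit : forall j, sqnorm H (e j) = 1.
Variables mu lam : nat -> R.
Hypothesis mu_range : forall j, 0 < mu j <= 1/2.
Hypothesis lam_range : forall j, 0 < lam j < 1/2.
Variables Smu Slam : R.
Hypothesis mu_sum : infinite_sum mu Smu.
Hypothesis lam_sum : infinite_sum lam Slam.
Variable z : Z.
Hypothesis sums_differ_by_int : Smu - Slam = IZR z.

Local Notation xi := (interleave mu lam).

Lemma interleave_range k : 0 < xi k < 1.
Proof.
  unfold interleave. destruct (Nat.even k);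
    [pose proof (mu_range (Nat.div2 k)) | pose proof (lam_range (Nat.div2 k))]; lra.
Qed.

Definition lam_tail j := Slam - rsum lam j.
Definition excess j := (Smu - rsum mu j) - lam_tail j.

Lemma lam_tail_pos j : 0 < lam_tail j.
Proof. pose proof (rsum_lt_lim lam Slam (fun i => proj1 (lam_range i)) lam_sum j). unfold lam_tail. lra. Qed.

Lemma lam_tail_S j : lam_tail j = lam j + lam_tail (S j).
Proof. unfold lam_tail. simpl. ring. Qed.

Lemma lam_tail_cv eps : eps > 0 -> exists J, forall j, (J <= j)%nat -> lam_tail j < eps.
Proof.
  intro he. destruct (rsum_cv lam Slam lam_sum eps he) as [J hJ]. exists J. intros j hj.
  specialize (hJ j hj). apply Rabs_def2 in hJ. unfold lam_tail. lra.
Qed.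

Lemma excess_cv eps : eps > 0 -> exists J, forall j, (J <= j)%nat -> Rabs (excess j) < eps.
Proof.
  intro he. destruct (rsum_cv mu Smu mu_sum (eps / 2)) as [J1 h1]; [lra|].
  destruct (rsum_cv lam Slam lam_sum (eps / 2)) as [J2 h2]; [lra|].
  exists (max J1 J2). intros j hj. specialize (h1 j ltac:(lia)). specialize (h2 j ltac:(lia)).
  apply Rabs_def2 in h1. apply Rabs_def2 in h2. unfold excess, lam_tail. apply Rabs_def1; lra.
Qed.

Lemma excess_ge j : - lam_tail j < excess j.
Proof. pose proof (rsum_lt_lim mu Smu (fun i => proj1 (mu_range i)) mu_sum j). unfold excess. lra. Qed.

Lemma excess_S j : excess j = mu j - lam j + excess (S j).
Proof. unfold excess, lam_tail. simpl. ring. Qed.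

Lemma resid_sq_double_int j :
  IZR (Z.of_nat (used H e xi (2 * j)) - Z.of_nat j - z) = resid_sq H e xi (2 * j) - excess j.
Proof.
  pose proof (resid_sq_add_rsum H e e_unit xi interleave_range (2 * j)) as h.
  rewrite rsum_interleave_double in h.
  rewrite !minus_IZR, <- !INR_IZR_INZ, <- sums_differ_by_int.
  unfold excess, lam_tail in *. lra.
Qed.

Lemma rsum_interleave_double_ge j : INR j / 2 <= rsum xi (2 * j).
Proof.
  induction j; [simpl; lra|].
  replace (2 * S j)%nat with (S (S (2 * j))) by lia. cbn [rsum].
  rewrite interleave_double, interleave_succ_double, S_INR.
  pose proof (mu_range j). pose proof (lam_range j). lra.
Qed.

Lemma used_unbounded M : exists k, (M <= used H e xi k)%nat.
Proof.
  exists (2 * (2 * M + 2))%nat.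
  pose proof (resid_sq_add_rsum H e e_unit xi interleave_range (2 * (2 * M + 2))).
  pose proof (resid_sq_bounds H e e_unit xi interleave_range (2 * (2 * M + 2))).
  pose proof (rsum_interleave_double_ge (2 * M + 2)).
  assert (INR M < INR (used H e xi (2 * (2 * M + 2)))); [|apply INR_lt in H3; lia].
  rewrite plus_INR, mult_INR in *. simpl INR in *. lra.
Qed.

Lemma resid_sq_succ_double_int j :
  IZR (Z.of_nat (used H e xi (S (2 * j))) - Z.of_nat j - z) = resid_sq H e xi (S (2 * j)) + lam j - excess (S j).
Proof.
  pose proof (resid_sq_add_rsum H e e_unit xi interleave_range (S (2 * j))) as h.
  cbn [rsum] in h. rewrite rsum_interleave_double, interleave_double in h.
  rewrite !minus_IZR, <- !INR_IZR_INZ, <- sums_differ_by_int.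
  pose proof (excess_S j). unfold excess, lam_tail in *. lra.
Qed.

Lemma resid_small_of_excess_nonneg :
  (forall J, exists j, (J <= j)%nat /\ 0 <= excess j) ->
  forall dl, dl > 0 -> forall N, exists k, (N <= k)%nat /\ resid_sq H e xi k <= dl.
Proof.
  intros hoften dl hdl N.
  destruct (excess_cv (Rmin dl (1 / 2))) as [J hJ]; [apply Rmin_pos; lra|].
  destruct (hoften (max J N)) as [j [hj hex]]. exists (2 * j)%nat. split; [lia|].
  specialize (hJ j ltac:(lia)). apply Rabs_def2 in hJ.
  pose proof (Rmin_l dl (1 / 2)). pose proof (Rmin_r dl (1 / 2)).
  pose proof (resid_sq_bounds H e e_unit xi interleave_range (2 * j)).
  pose proof (resid_sq_double_int j) as hint.
  rewrite (IZR_near _ 0) in hint by (rewrite hint; change (IZR 0) with 0; split; lra).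
  change (IZR 0) with 0 in hint. lra.
Qed.

Lemma frac_le (a b l : R) : 0 <= a -> a <= b -> 0 < l -> a / (l + a) <= b / (l + b).
Proof.
  intros. apply Rmult_le_reg_r with ((l + a) * (l + b)); [nra|].
  replace (a / (l + a) * ((l + a) * (l + b))) with (a * (l + b)) by (field; lra).
  replace (b / (l + b) * ((l + a) * (l + b))) with (b * (l + a)) by (field; lra). nra.
Qed.

Lemma shrink_odd_sq_le j : excess (S j) < 0 -> lam_tail j < 1 ->
  shrink H e xi (S (2 * j)) * shrink H e xi (S (2 * j)) <= lam_tail (S j) / lam_tail j.
Proof.
  intros hneg htail. set (k := S (2 * j)).
  pose proof (resid_sq_bounds H e e_unit xi interleave_range k) as hr.
  pose proof (excess_ge (S j)). pose proof (lam_tail_S j). pose proof (lam_range j).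
  pose proof (resid_sq_succ_double_int j) as hint. fold k in hint.
  rewrite (IZR_near _ 1) in hint by (rewrite hint; change (IZR 1) with 1; split; lra).
  change (IZR 1) with 1 in hint.
  assert (hrk : resid_sq H e xi k = 1 - lam j + excess (S j)) by lra.
  assert (hxk : xi k = 1 - lam j) by apply interleave_succ_double.
  unfold shrink. rewrite hrk, hxk. destruct (Rle_dec _ _); [lra|].
  rewrite sqrt_div_sq by lra.
  replace ((1 - lam j - (1 - lam j + excess (S j))) / (1 - (1 - lam j + excess (S j))))
    with (- excess (S j) / (lam j + - excess (S j))) by (field; lra).
  replace (lam_tail j) with (lam j + lam_tail (S j)) by lra.
  apply frac_le; lra.
Qed.

Lemma lam_tail_antimono j j' : (j <= j')%nat -> lam_tail j' <= lam_tail j.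
Proof.
  intro h. pose proof (rsum_le lam j j' (fun i => Rlt_le _ _ (proj1 (lam_range i))) h).
  unfold lam_tail. lra.
Qed.

Lemma decay_telescope J : (forall j, (J <= j)%nat -> excess j < 0) -> lam_tail J < 1 ->
  forall i, decay H e xi (2 * J) (2 * i) <= lam_tail (J + i) / lam_tail J.
Proof.
  intros hneg htail. pose proof (lam_tail_pos J). induction i.
  - rewrite Nat.add_0_r. simpl. right. field. lra.
  - replace (2 * S i)%nat with (S (S (2 * i))) by lia. cbn [decay].
    replace (2 * J + 2 * i)%nat with (2 * (J + i))%nat by lia.
    replace (2 * J + S (2 * i))%nat with (S (2 * (J + i)))%nat by lia.
    replace (J + S i)%nat with (S (J + i)) by lia.
    set (j := (J + i)%nat) in *.
    pose proof (shrink_bounds H e e_unit xi interleave_range (2 * j)).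
    pose proof (decay_bounds H e e_unit xi interleave_range (2 * J) (2 * i)).
    pose proof (lam_tail_pos j). pose proof (lam_tail_pos (S j)).
    pose proof (lam_tail_antimono J j ltac:(unfold j; lia)).
    pose proof (shrink_odd_sq_le j (hneg (S j) ltac:(unfold j; lia)) ltac:(lra)) as hodd.
    set (P := decay H e xi (2 * J) (2 * i)) in *.
    set (b0 := shrink H e xi (2 * j)) in *. set (b1 := shrink H e xi (S (2 * j))) in *.
    assert (hP : P * (b0 * b0) <= lam_tail j / lam_tail J).
    { assert (b0 * b0 <= 1) by nra. apply Rle_trans with P; [nra | exact IHi]. }
    apply Rle_trans with (lam_tail j / lam_tail J * (lam_tail (S j) / lam_tail j)).
    + apply Rmult_le_compat; [nra | nra | exact hP | exact hodd].
    + right. field. lra.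
Qed.

Lemma decay_vanish_of_excess_neg : (exists J, forall j, (J <= j)%nat -> excess j < 0) ->
  forall N, exists s, (N <= s)%nat /\ forall dl, dl > 0 -> exists d, decay H e xi s d <= dl.
Proof.
  intros [J hneg] N.
  destruct (lam_tail_cv 1) as [J1 hJ1]; [lra|].
  set (J2 := max (max J N) J1). exists (2 * J2)%nat. split; [lia|].
  intros dl hdl. pose proof (lam_tail_pos J2).
  destruct (lam_tail_cv (dl * lam_tail J2)) as [J3 hJ3]; [nra|].
  exists (2 * J3)%nat.
  eapply Rle_trans; [apply decay_telescope|].
  - intros j hj. apply hneg. lia.
  - apply hJ1. lia.
  - specialize (hJ3 (J2 + J3)%nat ltac:(lia)).
    apply Rmult_le_reg_r with (lam_tail J2); [lra|]. field_simplify; lra.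
Qed.

Lemma coef_vanish A x : sot_sum (fun j => outer H (e j)) A ->
  forall eps, eps > 0 -> exists N, forall k, (N <= k)%nat -> coef H e xi x k <= eps.
Proof.
  intro hA. pose proof (energy_cauchy_of_sot H e A x hA) as hcauchy.
  destruct (classic (forall J, exists j, (J <= j)%nat /\ 0 <= excess j)) as [hoften|hrare].
  - exact (coef_vanish_of_resid_small H e e_unit xi interleave_range x hcauchy
             used_unbounded (resid_small_of_excess_nonneg hoften)).
  - apply (coef_vanish_of_decay_vanish H e e_unit xi interleave_range x hcauchy used_unbounded).
    apply decay_vanish_of_excess_neg.
    apply not_all_ex_not in hrare as [J hJ]. exists J. intros j hj.
    apply Rnot_le_lt. intro. apply hJ. exists j. auto.
Qed.

End Interleave.

Section Admissible.
Variable H : CHilbert.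

Lemma sot_sum_ext (T1 T2 : nat -> operator H) A :
  (forall j x, T1 j x = T2 j x) -> sot_sum T1 A -> sot_sum T2 A.
Proof.
  intros h hA x eps heps. destruct (hA x eps heps) as [N hN]. exists N. intros n hn.
  replace (psum T2 x n) with (psum T1 x n); [apply hN, hn|].
  clear hn. induction n; simpl; [reflexivity|]. rewrite IHn, h. reflexivity.
Qed.

Lemma vnorm_eq1 (v : H) : vnorm v = 1 <-> sqnorm H v = 1.
Proof.
  unfold vnorm, sqnorm. split; intro h.
  - rewrite <- (sqrt_sqrt _ (inner_pos H v)), h. ring.
  - rewrite h. apply sqrt_1.
Qed.

Lemma rank_one_projection_outer (P : operator H) :
  rank_one_projection P -> exists v, sqnorm H v = 1 /\ forall x, P x = outer H v x.
Proof. intros [v [hv hP]]. exists v. split; [apply vnorm_eq1, hv | exact hP]. Qed.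

Lemma outer_normalize (v : H) (o : R) : 0 < o -> sqnorm H v = o ->
  let u := smul (RtoC (/ sqrt o)) v in
  sqnorm H u = 1 /\ forall x, smul (RtoC o) (outer H u x) = outer H v x.
Proof.
  intros ho hv u. pose proof (sqrt_lt_R0 o ho).
  assert (hinv : / sqrt o * / sqrt o = / o)
    by (rewrite <- Rinv_mult, sqrt_sqrt by lra; reflexivity).
  split.
  - unfold u. rewrite sqnorm_smul, hv. unfold Cnorm2. simpl.
    rewrite Rmult_0_l, Rplus_0_r, hinv. field. lra.
  - intro x. unfold u. rewrite outer_smul_real, smul_assoc, hinv.
    rewrite <- (smul_one H (outer H v x)) at 2. f_equal. apply C_ext; simpl; field; lra.
Qed.

End Admissible.

Theorem lemma3p8 (H : CHilbert) (A : operator H) (E : nat -> operator H)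
  (mu lam : nat -> R) :
  (forall j, rank_one_projection (E j)) ->
  sot_sum E A ->
  (forall j, 0 < mu j <= 1/2) ->
  (forall j, 0 < lam j < 1/2) ->
  (exists Smu Slam : R, infinite_sum mu Smu /\ infinite_sum lam Slam /\
     exists z : Z, Smu - Slam = IZR z) ->
  Adm A (interleave mu lam).
Proof.
  intros hE hA hmu hlam [Smu [Slam [hSmu [hSlam [z hz]]]]].
  destruct (choice _ (fun j => rank_one_projection_outer H (E j) (hE j))) as [e he].
  assert (e_unit : forall j, sqnorm H (e j) = 1) by apply he.
  assert (hAe : sot_sum (fun j => outer H (e j)) A)
    by (apply (sot_sum_ext H E); [apply he | exact hA]).
  pose proof (interleave_range mu lam hmu hlam) as xi_range.
  unfold Adm. set (xi := interleave mu lam) in *.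
  pose proof (sot_sum_pieces H e e_unit xi xi_range A hAe
    (used_unbounded H e e_unit mu lam hmu hlam)
    (fun x => coef_vanish H e e_unit mu lam hmu hlam Smu Slam hSmu hSlam z hz A x hAe)) as hpieces.
  set (u k := smul (RtoC (/ sqrt (xi k))) (piece H e xi k)).
  assert (hu : forall k, sqnorm H (u k) = 1 /\
                 forall x, smul (RtoC (xi k)) (outer H (u k) x) = outer H (piece H e xi k) x)
    by (intro k; apply outer_normalize; [apply xi_range | apply piece_sqnorm; assumption]).
  split; [intro k; pose proof (xi_range k); lra|].
  split; [exists 1; intro k; pose proof (xi_range k); lra|].
  exists (fun k => outer H (u k)). split.
  - intro k. exists (u k). split; [apply vnorm_eq1, hu | reflexivity].
  - apply (sot_sum_ext H (fun k => outer H (piece H e xi k))); [|exact hpieces].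
    intros k x. symmetry. apply hu.
Qed.
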